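(* Let $C$ be a set of pairwise disjoint lines on the Fermat cubic ${\rm F}_3$ and put $C^s=C\cap\mathcal{L}^s$ for $s=0,1,2$. If $\#C^s=3$ for some $s$, then there exists $k\in\{0,1,2\}\setminus\{s\}$ such that $C^k=\emptyset$.
   Context: ${\rm F}_3\subset\mathbb{P}^3(\mathbb{C})$ is the surface $x^3-y^3-z^3+w^3=0$. Let $\eta$ be a primitive cube root of unity and $v=-1$. For $k,i\in\{0,1,2\}$ define $L^0_{k,i}:\{y=\eta^i x,\ w=\eta^k z\}$, $L^1_{k,i}:\{x=\eta^{k+i}z,\ y=\eta^i w\}$, $L^2_{k,i}:\{x=v\eta^i w,\ y=v\eta^{k+i}z\}$, and $\mathcal{L}^s=\{L^s_{k,i}\}_{k,i}$; the 27 lines on ${\rm F}_3$ are exactly $\mathcal{L}^0\cup\mathcal{L}^1\cup\mathcal{L}^2$. *)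

From HB Require Import structures.
From mathcomp Require Import all_boot all_order all_algebra.
Set Implicit Arguments. Unset Strict Implicit. Unset Printing Implicit Defensive.
Import Order.TTheory GRing.Theory Num.Theory.
Local Open Scope ring_scope.

(* Homogeneous coordinates (x, y, z, w) of a point of P^3 over R. *)
Definition coord4 (R : Type) := (R * R * R * R)%type.

Definition line_index := ('I_3 * 'I_3 * 'I_3)%type.

(* The (affine cone over the) line L^s_{k,i}, with eta a primitive cube root
   of unity and v = -1. *)
Definition on_line (R : nzRingType) (eta : R) (l : line_index) (p : coord4 R) : Prop :=
  let: (s, k, i) := l in
  let: (x, y, z, w) := p in
  let v := (-1 : R) in
  match nat_of_ord s with
  | 0%N => y = eta ^+ i * x /\ w = eta ^+ k * z
  | 1%N => x = eta ^+ (k + i) * z /\ y = eta ^+ i * w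
  | _   => x = v * eta ^+ i * w /\ y = v * eta ^+ (k + i) * z
  end.

Definition nonzero4 (R : nzRingType) (p : coord4 R) : Prop :=
  let: (x, y, z, w) := p in ~ (x = 0 /\ y = 0 /\ z = 0 /\ w = 0).

(* Two lines of P^3 are disjoint iff they share no projective point, i.e.
   no nonzero vector of R^4 lies on both. *)
Definition lines_disjoint (R : nzRingType) (eta : R) (l1 l2 : line_index) : Prop :=
  forall p : coord4 R, nonzero4 p -> on_line eta l1 p -> on_line eta l2 p -> False.

Definition pairwise_disjoint (R : nzRingType) (eta : R) (C : {set line_index}) : Prop :=
  forall l1 l2, l1 \in C -> l2 \in C -> l1 != l2 -> lines_disjoint eta l1 l2.

Definition Cpart (C : {set line_index}) (s : 'I_3) : {set line_index} :=
  [set l in C | l.1.1 == s].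

From HB Require Import structures.
From mathcomp Require Import all_boot all_order all_algebra.
From mathcomp Require Import zify.
Import Order.TTheory GRing.Theory Num.Theory.
Local Open Scope ring_scope.

(* Incidence of the 27 lines is read off the indices. For instance, three
   pairwise skew lines of L^0 are L^0_{k,σ(k)} for a permutation σ of Z/3, and
   L^1_{k',i'} (resp. L^2_{k',i'}) meets L^0_{k,i} iff k' = k - i
   (resp. k' = k + i). As σ is x |-> ±x + c, one of k |-> k - σ(k) and
   k |-> k + σ(k) is onto Z/3, so every line of L^1 or every line of L^2 meets
   one of the three, and that family contains no line of C. The families L^1
   and L^2 behave alike; all cases are checked by enumerating the triples. *)

Definition line_family (l : line_index) : 'I_3 := l.1.1.

(* The exact incidence relation between L^s_{k,i} and L^t_{k',i'} for s <= t;
   only the direction "criterion implies common point" is needed. *)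
Definition meets_ordered (l1 l2 : line_index) : bool :=
  let: (s, k, i) := l1 in
  let: (t, k', i') := l2 in
  match nat_of_ord s, nat_of_ord t with
  | 0, 0 => (k == k') || (i == i')
  | 1, 1 | 2, 2 => (i == i') || (k + i == k' + i' %[mod 3])
  | 0, 1 => k == i + k' %[mod 3]
  | 0, 2 => k' == k + i %[mod 3]
  | 1, 2 => k + 2 * i == k' + 2 * i' %[mod 3]
  | _, _ => false
  end%N.

Definition lines_meetb (l1 l2 : line_index) : bool :=
  meets_ordered l1 l2 || meets_ordered l2 l1.

Definition skew_lines (l1 l2 : line_index) : bool := ~~ lines_meetb l1 l2.

Section Incidence.
Context {R : nzRingType} {eta : R}.
Hypothesis eta3 : eta ^+ 3 = 1.

Lemma expr_eta_mod3 (n m : nat) : n = m %[mod 3] -> eta ^+ n = eta ^+ m.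
Proof. by move=> nm; rewrite -(expr_mod n eta3) -(expr_mod m eta3) nm. Qed.

Ltac eta_exponents :=
  rewrite ?(mulr1, mul1r, mulN1r, mulrN, mulNr, opprK, mulr0, oppr0, mul0r)
          -?exprD; try done; try congr (- _); apply: expr_eta_mod3; lia.

Lemma nonzero4_x1 (y z w : R) : nonzero4 (1, y, z, w).
Proof. by case=> /eqP; rewrite oner_eq0. Qed.

Lemma nonzero4_z1 (x y w : R) : nonzero4 (x, y, 1, w).
Proof. by case=> _ [_ [/eqP]]; rewrite oner_eq0. Qed.

Lemma nonzero4_w1 (x y z : R) : nonzero4 (x, y, z, 1).
Proof. by case=> _ [_ [_ /eqP]]; rewrite oner_eq0. Qed.

Lemma meets_ordered_common_point (l1 l2 : line_index) :
  meets_ordered l1 l2 ->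
  exists2 p, nonzero4 p & on_line eta l1 p /\ on_line eta l2 p.
Proof.
case: l1 l2 => [[[[|[|[|?]]] ?] k] i] [[[[|[|[|?]]] ?] k'] i'] //=.
- case/orP=> /eqP E.
  + exists (0, 0, 1, eta ^+ k); first exact: nonzero4_z1.
    by rewrite /on_line /= E; split; split; eta_exponents.
  + exists (1, eta ^+ i, 0, 0); first exact: nonzero4_x1.
    by rewrite /on_line /= E; split; split; eta_exponents.
- move/eqP=> E; exists (eta ^+ (k' + i'), eta ^+ (i' + k), 1, eta ^+ k).
    exact: nonzero4_z1.
  by rewrite /on_line /=; split; split; eta_exponents.
- move/eqP=> E; exists (- eta ^+ (i' + k), - eta ^+ (k' + i'), 1, eta ^+ k).
    exact: nonzero4_z1.
  by rewrite /on_line /=; split; split; eta_exponents.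
- case/orP=> /eqP E.
  + exists (0, eta ^+ i, 0, 1); first exact: nonzero4_w1.
    by rewrite /on_line /= E; split; split; eta_exponents.
  + exists (eta ^+ (k + i), 0, 1, 0); first exact: nonzero4_z1.
    by rewrite /on_line /=; split; split; eta_exponents.
- move/eqP=> E.
  exists (eta ^+ (k + i), - eta ^+ (k' + i'), 1, - eta ^+ (k' + i' + 2 * i)).
    exact: nonzero4_z1.
  by rewrite /on_line /=; split; split; eta_exponents.
- case/orP=> /eqP E.
  + exists (- eta ^+ i, 0, 0, 1); first exact: nonzero4_w1.
    by rewrite /on_line /= E; split; split; eta_exponents.
  + exists (0, - eta ^+ (k + i), 1, 0); first exact: nonzero4_z1.
    by rewrite /on_line /=; split; split; eta_exponents.
Qed.

Lemma lines_meetb_not_disjoint (l1 l2 : line_index) :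
  lines_meetb l1 l2 -> ~ lines_disjoint eta l1 l2.
Proof.
by case/orP=> /meets_ordered_common_point [p nz_p [on1 on2]] disj;
  [exact: disj nz_p on1 on2 | exact: disj nz_p on2 on1].
Qed.

Lemma pairwise_disjoint_skew (C : {set line_index}) :
  pairwise_disjoint eta C ->
  {in C &, forall l1 l2, l1 != l2 -> skew_lines l1 l2}.
Proof.
move=> disjC l1 l2 l1C l2C neq; apply/negP => meet.
exact: lines_meetb_not_disjoint meet (disjC _ _ l1C l2C neq).
Qed.

End Incidence.

(* Unlike [ord_enum 3], which goes through the opaque [idP], this list
   reduces under [vm_compute]. *)
Definition ord3_enum : seq 'I_3 :=
  [:: @Ordinal 3 0 isT; @Ordinal 3 1 isT; @Ordinal 3 2 isT].

Lemma mem_ord3_enum (k : 'I_3) : k \in ord3_enum.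
Proof. by case: k => [[|[|[|?]]] ?]; rewrite // !inE -!val_eqE. Qed.

Definition family_lines (s : 'I_3) : seq line_index :=
  [seq (s, k, i) | k <- ord3_enum, i <- ord3_enum].

Lemma mem_family_lines (s : 'I_3) (l : line_index) :
  (l \in family_lines s) = (line_family l == s).
Proof.
case: l => [[t k] i]; rewrite /line_family /=.
apply/idP/eqP => [/allpairsP [[k' i'] /= [_ _ [-> _ _]]] // | ->].
by apply: (allpairs_f (fun k i => (s, k, i))); exact: mem_ord3_enum.
Qed.

Definition blocks_family (T : seq line_index) (t : 'I_3) : bool :=
  all (fun l => has (lines_meetb l) T) (family_lines t).

Lemma skew_triples_block_other_family :
  all (fun s => all (fun t1 => all (fun t2 => all (fun t3 =>
    pairwise skew_lines [:: t1; t2; t3] ==>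
    has (fun t => (t != s) && blocks_family [:: t1; t2; t3] t) ord3_enum)
  (family_lines s)) (family_lines s)) (family_lines s)) ord3_enum.
Proof. by vm_compute. Qed.

Lemma three_skew_lines_block_other_family (T : {set line_index}) (s : 'I_3) :
  #|T| = 3%N -> {in T, forall l, line_family l = s} ->
  {in T &, forall l1 l2, l1 != l2 -> skew_lines l1 l2} ->
  exists2 t, t != s &
    forall l, line_family l = t -> exists2 l', l' \in T & lines_meetb l l'.
Proof.
move=> card3 famT skewT.
have := cardE T; rewrite card3; move: (enum_uniq T) (mem_enum T).
case: (enum T) => [|t1 [|t2 [|t3 []]]] //= uniqT memT _.
have inT t : t \in [:: t1; t2; t3] -> t \in T by rewrite memT.
have [t1T t2T t3T] : [/\ t1 \in T, t2 \in T & t3 \in T].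
  by split; apply: inT; rewrite !inE eqxx ?orbT.
have [t1s t2s t3s] :
    [/\ t1 \in family_lines s, t2 \in family_lines s & t3 \in family_lines s].
  by rewrite !mem_family_lines !famT.
have skew123 : pairwise skew_lines [:: t1; t2; t3].
  move: uniqT; rewrite /= !inE !negb_or !andbT.
  move=> /andP [/andP [ne12 ne13] ne23].
  by rewrite !skewT.
have /allP/(_ s (mem_ord3_enum s))/allP/(_ t1 t1s)/allP/(_ t2 t2s)
     /allP/(_ t3 t3s)/implyP/(_ skew123) := skew_triples_block_other_family.
case/hasP=> t _ /andP [ts blocks_t]; exists t => // l lt.
have := allP blocks_t l; rewrite mem_family_lines lt eqxx.
move=> /(_ isT) /hasP [l' l'T meet].
by exists l'; first exact: inT.
Qed.

Theorem proposition3p1 (R : numClosedFieldType) (eta : R)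
  (heta : 3.-primitive_root eta) (C : {set line_index}) :
  pairwise_disjoint eta C ->
  forall s : 'I_3, #|Cpart C s| = 3%N ->
  exists k : 'I_3, k != s /\ Cpart C k = set0.
Proof.
move=> /(pairwise_disjoint_skew (prim_expr_order heta)) skewC s card3.
have mem_Cpart l t : (l \in Cpart C t) = (l \in C) && (line_family l == t).
  by rewrite inE.
have [t ts blocked] : exists2 t, t != s &
    forall l, line_family l = t ->
    exists2 l', l' \in Cpart C s & lines_meetb l l'.
  apply: three_skew_lines_block_other_family card3 _ _.
  - by move=> l; rewrite mem_Cpart => /andP [_ /eqP].
  - move=> l1 l2; rewrite !mem_Cpart => /andP [l1C _] /andP [l2C _].
    exact: skewC.
exists t; split=> //; apply/setP=> l; rewrite in_set0 mem_Cpart.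
apply/negbTE/andP => -[lC /eqP lt].
have [l'] := blocked l lt; rewrite mem_Cpart => /andP [l'C /eqP l's] meet.
have ll' : l != l' by apply: contraNneq ts => eq_ll'; rewrite -lt eq_ll' l's.
by move: (skewC l l' lC l'C ll'); rewrite /skew_lines meet.
Qed.
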